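(* Let $\Sigma$ be an alphabet with $|\Sigma|\ge 3$ and $f\colon\Sigma^*\to\Sigma^*$ RCP. If there are letters $a,b\in\Sigma$ with $a\neq b$ and $f(a)\in b\Sigma^*$, then $f(x)\in b\Sigma^*$ for all $x\in\Sigma^*$.
   Context: $\Sigma^*$ is the free monoid over $\Sigma$ (finite words, concatenation, empty word $\varepsilon$). For a word $w$, $w\Sigma^*$ denotes the set of words having $w$ as a prefix. A function $f\colon(\Sigma^* )^k\to\Sigma^*$ is RCP if for every monoid morphism $\varphi\colon\Sigma^*\to\Sigma^*$ and all $u_1,\ldots,u_k,v_1,\ldots,v_k$ with $\varphi(u_i)=\varphi(v_i)$ for all $i$, we have $\varphi(f(u_1,\ldots,u_k))=\varphi(f(v_1,\ldots,v_k))$. *)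

From mathcomp Require Import all_boot.
Set Implicit Arguments. Unset Strict Implicit. Unset Printing Implicit Defensive.

Definition monoid_morph (S : Type) (phi : seq S -> seq S) : Prop :=
  phi [::] = [::] /\ forall u v : seq S, phi (u ++ v) = phi u ++ phi v.

(* RCP for unary functions (k = 1). *)
Definition RCP1 (S : Type) (f : seq S -> seq S) : Prop :=
  forall phi : seq S -> seq S, monoid_morph phi ->
    forall u v : seq S, phi u = phi v -> phi (f u) = phi (f v).

Definition starts_with (S : Type) (b : S) (w : seq S) : Prop :=
  exists t : seq S, w = b :: t.

From mathcomp Require Import all_boot.

Set Implicit Arguments.
Unset Strict Implicit.
Unset Printing Implicit Defensive.

(* A substitution of a word for a single letter [g] fixes every other letter,
   so it cannot change a first letter other than [g], and by RCP it maps
   [f x] and [f y] to the same word whenever it identifies [x] and [y].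
   Renaming [a] to [d] shows that [f [:: d]] starts with [b] for every
   [d != b].  For an arbitrary [x], pick [g] outside [b] and the first letter
   of [f x]: if [g] does not occur in [x], substituting [x] for [g]
   identifies [x] with [[:: g]]; otherwise erasing [g] identifies [x] with a
   shorter word.  Either way the image of [f x] starts with [b], hence so
   does [f x]. *)

Section Substitution.

Variable S : eqType.

Definition word_morph (h : S -> seq S) (w : seq S) : seq S := flatten (map h w).

Lemma word_morph_monoid (h : S -> seq S) : monoid_morph (word_morph h).
Proof. by split=> // u v; rewrite /word_morph map_cat flatten_cat. Qed.

Definition subst_letter (g : S) (u : seq S) (z : S) : seq S :=
  if z == g then u else [:: z].

Lemma word_morph_subst_letter_notin (g : S) (u w : seq S) :
  g \notin w -> word_morph (subst_letter g u) w = w.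
Proof.
elim: w => [|z w IHw] //=; rewrite inE negb_or => /andP[zg gw].
by rewrite -{2}(IHw gw) /word_morph /= /subst_letter eq_sym (negbTE zg).
Qed.

Lemma word_morph_subst_letter1 (g : S) (u : seq S) :
  word_morph (subst_letter g u) [:: g] = u.
Proof. by rewrite /word_morph /= /subst_letter eqxx cats0. Qed.

Lemma word_morph_erase_letter (g : S) (w : seq S) :
  word_morph (subst_letter g [::]) w = [seq z <- w | z != g].
Proof.
elim: w => [|z w IHw] //=; rewrite -IHw /word_morph /= /subst_letter.
by case: (z == g).
Qed.

Lemma starts_with_subst_letter (g b : S) (u w : seq S) :
  b != g -> head b w != g ->
  starts_with b (word_morph (subst_letter g u) w) -> starts_with b w.
Proof.
move=> bg; case: w => [|e w] /= eg; first by case.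
by rewrite /word_morph /= /subst_letter (negbTE eg) => -[t [-> _]]; exists w.
Qed.

Lemma starts_with_rename_letter (g c b : S) (w : seq S) :
  b != g -> c != b ->
  starts_with b (word_morph (subst_letter g [:: c]) w) -> starts_with b w.
Proof.
case: w => [|e w] bg cb; first by case.
case: (eqVneq e g) => [-> | eg]; last exact: starts_with_subst_letter.
by rewrite /word_morph /= /subst_letter eqxx => -[t [cbE _]]; rewrite cbE eqxx in cb.
Qed.

End Substitution.

Section RCPFirstLetter.

Variables (S : eqType) (f : seq S -> seq S).
Hypothesis f_RCP : RCP1 f.

Lemma RCP1_subst_letter (g b : S) (u x y : seq S) :
  b != g -> word_morph (subst_letter g u) x = word_morph (subst_letter g u) y ->
  starts_with b (f y) -> starts_with b (word_morph (subst_letter g u) (f x)).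
Proof.
move=> bg Exy [t fy]; rewrite (f_RCP (word_morph_monoid _) Exy) fy.
by rewrite /word_morph /= /subst_letter (negbTE bg); eexists.
Qed.

Lemma RCP1_starts_with_letter (a b d : S) :
  a != b -> d != b -> starts_with b (f [:: a]) -> starts_with b (f [:: d]).
Proof.
move=> ab db fa; case: (eqVneq d a) => [-> // | da].
have ba : b != a by rewrite eq_sym.
apply: (starts_with_rename_letter ba db).
apply: (RCP1_subst_letter (y := [:: a]) ba) => //.
by rewrite (word_morph_subst_letter1 a) word_morph_subst_letter_notin // inE eq_sym.
Qed.

End RCPFirstLetter.

Lemma exists_third_letter (S : finType) (e b : S) :
  2 < #|S| -> exists g : S, g \notin [:: e; b].
Proof.
rewrite -(cardC (mem [:: e; b])) => S3.
apply/(@card_gt0P _ [predC (mem [:: e; b])]).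
rewrite lt0n; apply: contraTneq S3 => ->.
by rewrite addn0 -leqNgt (card_size [:: e; b]).
Qed.

Lemma RCP1_starts_with (S : finType) (f : seq S -> seq S) (b : S) :
  2 < #|S| -> RCP1 f -> (forall d, d != b -> starts_with b (f [:: d])) ->
  forall x, starts_with b (f x).
Proof.
move=> S3 f_RCP f_letter x.
elim: {x}(size x).+1 {-2}x (ltnSn (size x)) => // n IHn x lt_x_n.
have [g] := exists_third_letter (head b (f x)) b S3.
rewrite !inE negb_or => /andP[gfx gb]; have bg : b != g by rewrite eq_sym.
suff [u [y [Exy fy]]] : exists u y, word_morph (subst_letter g u) x =
    word_morph (subst_letter g u) y /\ starts_with b (f y).
  apply: (starts_with_subst_letter bg); first by rewrite eq_sym.
  exact: RCP1_subst_letter Exy fy.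
case: (boolP (g \in x)) => gx.
- have lt_erase_x : size [seq z <- x | z != g] < size x.
    rewrite size_filter -(count_predC (predC1 g) x) -{1}[count _ x]addn0.
    by rewrite ltn_add2l -has_count; apply/hasP; exists g; rewrite //= eqxx.
  exists [::], [seq z <- x | z != g]; split.
    by rewrite !word_morph_erase_letter filter_id.
  exact: IHn (leq_trans lt_erase_x lt_x_n).
- exists x, [:: g]; split; last exact: f_letter.
  by rewrite word_morph_subst_letter1 word_morph_subst_letter_notin.
Qed.

Theorem mainTheorem8 (S : finType) (f : seq S -> seq S) :
  3 <= #|S| -> RCP1 f ->
  forall a b : S, a <> b -> starts_with b (f [:: a]) ->
  forall x : seq S, starts_with b (f x).
Proof.
move=> S3 f_RCP a b /eqP ab fa.
apply: RCP1_starts_with => // d db.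
exact: RCP1_starts_with_letter ab db fa.
Qed.
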